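(* Consider the two-agent series component maintenance game with prior probabilities $p_1,p_2\in(0,1)$ that components $1,2$ work. Then there exist repair costs $C_1,C_2$ for which the Price of Anarchy without subsidy satisfies $\mathrm{PoA}\ge \frac{2}{p_1+p_2}$. More generally, for the $n$-agent series component maintenance game with prior probabilities $p_1,\dots,p_n\in(0,1)$, there exist repair costs $C_1,\dots,C_n$ for which $\mathrm{PoA}\ge \tilde H/\tilde G^{\,n}$, where $\tilde H=\frac{n}{\sum_i 1/p_i}$ and $\tilde G=(\prod_i p_i)^{1/n}$ are the harmonic and geometric means of $p_1,\dots,p_n$.
   Context: Component maintenance game: agent $i\in[n]$ owns component $i$ with random binary state $x_i\in\{0,1\}$ ($1$ = working), the components being independent with $\Pr[x_i=1]=p_i$. Each agent chooses $s_i\in\{0,1\}$ ($1$ = repair, $0$ = do nothing); after the actions the component state is $x_i'=\max\{x_i,s_i\}$. The system state is $\phi(\bm{x}')$ for a fixed Boolean function $\phi$; in the series system $\phi(\bm{x})=x_1\wedge\dots\wedge x_n$. Agent $i$ has repair cost $C_i\in\mathbb{R}$ and expected cost $l_i(s)=C_is_i+1-\mathbb{E}[\phi(\bm{x}'(s))]$; the social cost is $\sum_i l_i(s)$ and $\mathsf{OPT}$ its minimum over joint actions. The Price of Anarchy without subsidy is $\mathrm{PoA}=\max_{s\in\mathcal{S}_{NE}}\mathrm{cost}(s)/\mathsf{OPT}$, where $\mathcal{S}_{NE}$ is the set of pure Nash equilibria. *)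

From HB Require Import structures.
From mathcomp Require Import all_boot all_order all_algebra.
From mathcomp Require Import reals exp.
Set Implicit Arguments. Unset Strict Implicit. Unset Printing Implicit Defensive.
Import Order.TTheory GRing.Theory Num.Theory.
Local Open Scope ring_scope.

Section Game.
Variables (R : realType) (n : nat).

(* joint action profiles / component state vectors *)
Definition profile := {ffun 'I_n -> bool}.

Definition series (x : profile) : bool := [forall i, x i].

Definition post (x s : profile) : profile := [ffun i => x i || s i].

Definition prob_state (p : 'I_n -> R) (x : profile) : R :=
  \prod_(i < n) (if x i then p i else 1 - p i).

Definition Ephi (phi : profile -> bool) (p : 'I_n -> R) (s : profile) : R :=
  \sum_(x : profile) prob_state p x * (phi (post x s))%:R.

Definition lcost (phi : profile -> bool) (p C : 'I_n -> R) (i : 'I_n)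
  (s : profile) : R := C i * (s i)%:R + 1 - Ephi phi p s.

Definition social_cost phi p C (s : profile) : R :=
  \sum_(i < n) lcost phi p C i s.

(* OPT: minimum social cost over all joint actions (the default element is
   itself a joint action, so this is the exact minimum) *)
Definition OPT phi p C : R :=
  \big[Num.min/social_cost phi p C [ffun=> false]]_(s : profile)
     social_cost phi p C s.

Definition deviate (s : profile) (i : 'I_n) (b : bool) : profile :=
  [ffun j => if j == i then b else s j].

Definition is_NE phi p C (s : profile) : bool :=
  [forall i, forall b : bool,
     lcost phi p C i s <= lcost phi p C i (deviate s i b)].

Definition PoA phi p C : R :=
  \big[Num.max/0]_(s : profile | is_NE phi p C s)
     (social_cost phi p C s / OPT phi p C).

Definition harm_mean (p : 'I_n -> R) : R := n%:R / \sum_(i < n) (p i)^-1.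
Definition geom_mean (p : 'I_n -> R) : R :=
  powR (\prod_(i < n) p i) (n%:R)^-1.

End Game.

From HB Require Import structures.
From mathcomp Require Import all_boot all_order all_algebra.
From mathcomp Require Import reals exp.
From mathcomp Require Import ring lra.
Import Order.TTheory GRing.Theory Num.Theory.
Local Open Scope ring_scope.

(* Choose the repair costs C_i = prod_(j != i) p_j - prod_j p_j, at which agent
   i is exactly indifferent between repairing and idling when nobody else
   repairs.  Then "nobody repairs" is a Nash equilibrium of cost n (1 - P),
   where P = prod_j p_j, while "everybody repairs" costs
   sum_i C_i = P (S - n) with S = sum_i 1/p_i, so
   PoA >= n (1 - P) / (P (S - n)) >= n / (S P) = H / G^n,
   the last step being equivalent to S P = sum_i prod_(j != i) p_j <= n. *)

Section PriceOfAnarchy.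
Context {R : realType} {n : nat} {phi : profile n -> bool} {p C : 'I_n -> R}.

Lemma OPT_le_social_cost (s : profile n) : OPT phi p C <= social_cost phi p C s.
Proof. exact: bigmin_le. Qed.

Lemma OPT_gt0 : (forall s, 0 < social_cost phi p C s) -> 0 < OPT phi p C.
Proof. by move=> cost_gt0; apply: lt_bigmin. Qed.

Lemma PoA_ge_NE (s : profile n) :
  is_NE phi p C s -> social_cost phi p C s / OPT phi p C <= PoA phi p C.
Proof. exact: le_bigmax_cond. Qed.

End PriceOfAnarchy.

Lemma prodr_nat_forall (S : nzSemiRingType) (I : finType) (b : I -> bool) :
  \prod_(i : I) ((b i)%:R : S) = ([forall i, b i])%:R.
Proof.
have -> : [forall i, b i] = \big[andb/true]_i b i by rewrite big_andE.
apply/esym/(big_morph (fun c : bool => c%:R : S)) => [c d|//].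
by case: c; rewrite ?mul1r ?mul0r.
Qed.

Lemma geom_mean_expn (R : realType) n (p : 'I_n -> R) :
  0 <= \prod_(i < n) p i -> geom_mean p ^+ n = \prod_(i < n) p i.
Proof.
case: n p => [|n] p P_ge0; first by rewrite expr0 big_ord0.
by rewrite /geom_mean -powR_mulrn ?powR_ge0 // -powRrM mulVf ?pnatr_eq0 ?powRr1.
Qed.

Lemma harm_geom_ratio (R : realType) n (p : 'I_n -> R) :
  (forall i, 0 < p i) ->
  harm_mean p / geom_mean p ^+ n
    = n%:R / ((\sum_(i < n) (p i)^-1) * \prod_(i < n) p i).
Proof.
move=> p_gt0; rewrite geom_mean_expn; last by apply: prodr_ge0 => i _; exact: ltW.
by rewrite /harm_mean -mulrA -invfM.
Qed.

Lemma idle_repair_ratio_ge (R : realFieldType) (m P S : R) :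
  0 < m -> 0 < P -> m < S -> S * P <= m ->
  m / (S * P) <= m * (1 - P) / (P * (S - m)).
Proof.
move=> m_gt0 P_gt0 m_lt_S SP_le_m.
have S_gt0 : 0 < S by apply: lt_trans m_lt_S.
rewrite ler_pdivrMr ?mulr_gt0 // mulrAC ler_pdivlMr ?mulr_gt0 ?subr_gt0 //.
have : 0 <= m * P * (m - S * P) by rewrite pmulr_rge0 ?mulr_gt0 // subr_ge0.
lra.
Qed.

Section SeriesGame.
Context {R : realType} {n : nat} (p : 'I_n -> R).

Lemma Ephi_series (s : profile n) :
  Ephi (@series n) p s = \prod_(i < n) (if s i then 1 else p i).
Proof.
rewrite /Ephi.
transitivity (\prod_(i < n) \sum_(b : bool)
                 ((if b then p i else 1 - p i) * (b || s i)%:R)).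
  rewrite bigA_distr_bigA; apply: eq_bigr => x _.
  rewrite big_split prodr_nat_forall /=; congr (_ * (nat_of_bool _)%:R).
  by apply: eq_forallb => i; rewrite ffunE.
apply: eq_bigr => i _; rewrite big_bool /=.
by case: (s i); rewrite ?mulr1 ?mulr0 ?addr0 // addrC subrK.
Qed.

Lemma Ephi_idle : Ephi (@series n) p [ffun=> false] = \prod_(i < n) p i.
Proof. by rewrite Ephi_series; apply: eq_bigr => i _; rewrite ffunE. Qed.

Lemma deviate_idle (i : 'I_n) : deviate [ffun=> false] i false = [ffun=> false].
Proof. by apply/ffunP => j; rewrite !ffunE; case: (j == i). Qed.

Lemma social_cost_idle (C : 'I_n -> R) :
  social_cost (@series n) p C [ffun=> false] = n%:R * (1 - \prod_(i < n) p i).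
Proof.
rewrite /social_cost (eq_bigr (fun=> 1 - \prod_(i < n) p i)) => [|i _].
  by rewrite sumr_const card_ord mulr_natl.
by rewrite /lcost Ephi_idle ffunE mulr0 add0r.
Qed.

Lemma social_cost_all_repair (C : 'I_n -> R) :
  social_cost (@series n) p C [ffun=> true] = \sum_(i < n) C i.
Proof.
apply: eq_bigr => i _; rewrite /lcost Ephi_series big1 => [|j _].
  by rewrite ffunE mulr1 addrK.
by rewrite ffunE.
Qed.

Definition indiff_cost (i : 'I_n) : R :=
  \prod_(j < n | j != i) p j - \prod_(j < n) p j.

Lemma idle_NE : is_NE (@series n) p indiff_cost [ffun=> false].
Proof.
apply/forallP => i; apply/forallP => -[]; last by rewrite deviate_idle.
have Ephi_dev : Ephi (@series n) p (deviate [ffun=> false] i true)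
                = \prod_(j < n | j != i) p j.
  rewrite Ephi_series (bigD1 i) //= !ffunE eqxx mul1r.
  by apply: eq_bigr => j /negbTE ji; rewrite !ffunE ji.
rewrite /lcost Ephi_dev Ephi_idle /indiff_cost !ffunE eqxx mulr0 mulr1; lra.
Qed.

Hypothesis p_in01 : forall i, 0 < p i < 1.

Let p_gt0 i : 0 < p i. Proof. by case/andP: (p_in01 i). Qed.
Let p_lt1 i : p i < 1. Proof. by case/andP: (p_in01 i). Qed.

Lemma lcost_series_gt0 (C : 'I_n -> R) (i : 'I_n) (s : profile n) :
  0 < C i -> 0 < lcost (@series n) p C i s.
Proof.
move=> C_gt0; rewrite /lcost Ephi_series (bigD1 i) //=.
set rest := \prod_(j < n | j != i) _.
have rest_ge0 : 0 <= rest.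
  by apply: prodr_ge0 => j _; case: (s j); rewrite ?ler01 ?ltW.
have rest_le1 : rest <= 1.
  by apply: prodr_ile1 => j _; case: (s j); rewrite ?ler01 ?lexx ?ltW.
have := p_gt0 i; have := p_lt1 i; case: (s i) => /= *; nra.
Qed.

Lemma social_cost_series_gt0 (C : 'I_n -> R) (s : profile n) :
  (0 < n)%N -> (forall i, 0 < C i) -> 0 < social_cost (@series n) p C s.
Proof.
move=> n_gt0 C_gt0; rewrite /social_cost (bigD1 (Ordinal n_gt0)) //=.
apply: ltr_wpDr; last exact: lcost_series_gt0.
by apply: sumr_ge0 => i _; apply/ltW/lcost_series_gt0.
Qed.

Lemma indiff_cost_gt0 i : 0 < indiff_cost i.
Proof.
rewrite /indiff_cost subr_gt0 [ltLHS](bigD1 i) //= -[ltRHS]mul1r ltr_pM2r //.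
exact: prodr_gt0.
Qed.

Lemma sum_prodD1 :
  \sum_(i < n) \prod_(j < n | j != i) p j
    = (\sum_(i < n) (p i)^-1) * \prod_(i < n) p i.
Proof.
rewrite mulr_suml; apply: eq_bigr => i _.
by rewrite [X in _ = _ * X](bigD1 i) //= mulrA mulVf ?mul1r ?lt0r_neq0.
Qed.

Lemma sum_indiff_cost :
  \sum_(i < n) indiff_cost i
    = \prod_(i < n) p i * (\sum_(i < n) (p i)^-1 - n%:R).
Proof.
by rewrite sumrB sum_prodD1 sumr_const card_ord mulrBr mulr_natr mulrC.
Qed.

Lemma sum_inv_mul_prod_le : (\sum_(i < n) (p i)^-1) * \prod_(i < n) p i <= n%:R.
Proof.
rewrite -sum_prodD1 -[n in n%:R]card_ord -sumr_const; apply: ler_sum => i _.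
by apply: prodr_ile1 => j _; rewrite !ltW.
Qed.

Lemma sum_inv_gt (n_gt0 : (0 < n)%N) : n%:R < \sum_(i < n) (p i)^-1.
Proof.
rewrite -[n in n%:R]card_ord -sumr_const; apply: ltr_sum => [|i _].
  by apply/hasP; exists (Ordinal n_gt0); rewrite ?mem_index_enum.
by rewrite invf_gt1.
Qed.

End SeriesGame.

Lemma series_PoA_ge_harm_geom (R : realType) n (p : 'I_n -> R) :
  (0 < n)%N -> (forall i, 0 < p i < 1) ->
  exists C : 'I_n -> R,
    0 < OPT (@series n) p C /\
    harm_mean p / geom_mean p ^+ n <= PoA (@series n) p C.
Proof.
move=> n_gt0 p_in01.
have p_gt0 i : 0 < p i by case/andP: (p_in01 i).
set P := \prod_(i < n) p i; set S := \sum_(i < n) (p i)^-1.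
have P_gt0 : 0 < P by apply: prodr_gt0.
have P_le1 : P <= 1.
  by apply: prodr_ile1 => i _; case/andP: (p_in01 i) => /ltW -> /ltW.
have n_lt_S : n%:R < S := sum_inv_gt _ p_in01 n_gt0.
have OPT_pos : 0 < OPT (@series n) p (indiff_cost p).
  apply: OPT_gt0 => s; apply: social_cost_series_gt0 => //.
  exact: indiff_cost_gt0.
exists (indiff_cost p); split => //.
rewrite harm_geom_ratio // -/S -/P; apply: le_trans (PoA_ge_NE _ (idle_NE p)).
rewrite social_cost_idle -/P.
apply: (@le_trans _ _ (n%:R * (1 - P) / (P * (S - n%:R)))).
  by apply: idle_repair_ratio_ge; rewrite ?ltr0n ?sum_inv_mul_prod_le.
apply: ler_wpM2l; first by rewrite mulr_ge0 ?ler0n // subr_ge0.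
rewrite lef_pV2 ?posrE ?mulr_gt0 ?subr_gt0 //.
rewrite -(sum_indiff_cost _ p_in01) -(social_cost_all_repair p).
exact: OPT_le_social_cost.
Qed.

Lemma harm_geom_ratio2 (R : realType) (p : 'I_2 -> R) :
  (forall i, 0 < p i) ->
  harm_mean p / geom_mean p ^+ 2 = 2 / (p ord0 + p ord_max).
Proof.
move=> p_gt0; rewrite harm_geom_ratio // !big_ord_recl !big_ord0 !addr0 !mulr1.
have -> : lift ord0 ord0 = ord_max :> 'I_2 by apply: val_inj.
have p0_neq0 := lt0r_neq0 (p_gt0 ord0).
have p1_neq0 := lt0r_neq0 (p_gt0 ord_max).
have sum_neq0 : p ord0 + p ord_max != 0 by rewrite lt0r_neq0 ?addr_gt0.
by field; rewrite p0_neq0 p1_neq0 sum_neq0.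
Qed.

Theorem proposition2 (R : realType) :
  (forall p : 'I_2 -> R, (forall i, 0 < p i < 1) ->
     exists C : 'I_2 -> R,
       0 < OPT (@series 2) p C /\
       2 / (p ord0 + p ord_max) <= PoA (@series 2) p C) /\
  (forall (n : nat) (p : 'I_n -> R), (0 < n)%N -> (forall i, 0 < p i < 1) ->
     exists C : 'I_n -> R,
       0 < OPT (@series n) p C /\
       harm_mean p / geom_mean p ^+ n <= PoA (@series n) p C).
Proof.
split; last exact: series_PoA_ge_harm_geom.
move=> p p_in01; rewrite -harm_geom_ratio2 => [|i]; last by case/andP: (p_in01 i).
exact: series_PoA_ge_harm_geom.
Qed.
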